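(* For any discrete random variables $U,V$, where $U$ has finite support $\mathcal{U}$, and any $\alpha>0$, $$\Pr\left(|h(V|U)-h(V)|>\alpha\right)<(|\mathcal{U}|+1)2^{-\alpha}.$$
   Context: $h(V|U)=-\log_2 p_{V|U}(V|U)$ and $h(V)=-\log_2 p_V(V)$ (random variables). *)

From HB Require Import structures.
From mathcomp Require Import all_boot all_order all_algebra.
From mathcomp Require Import all_classical all_reals all_analysis.
Set Implicit Arguments. Unset Strict Implicit. Unset Printing Implicit Defensive.
Import Order.TTheory GRing.Theory Num.Theory.
Local Open Scope classical_set_scope.
Local Open Scope ring_scope.

(* The pair (U,V) of discrete random variables is described by its joint
   probability mass function p u v = Pr(U = u, V = v); U takes values in a
   finite type, V in a countable type. *)
Section InfoDensity.
Variables (R : realType) (U : finType) (V : countType).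

Definition is_joint_pmf (p : U -> V -> R) : Prop :=
  (forall u v, 0 <= p u v) /\
  (\esum_(x in [set: U * V]) (p x.1 x.2)%:E = 1)%E.

Definition Pr (p : U -> V -> R) (E : set (U * V)) : \bar R :=
  \esum_(x in E) (p x.1 x.2)%:E.

Definition pU (p : U -> V -> R) (u : U) : R := fine (\esum_(v in [set: V]) (p u v)%:E).
Definition pV (p : U -> V -> R) (v : V) : R := \sum_(u : U) p u v.

Definition pVgU (p : U -> V -> R) (v : V) (u : U) : R := p u v / pU p u.

Definition log2 (x : R) : R := ln x / ln 2.

Definition hVgU (p : U -> V -> R) (u : U) (v : V) : R := - log2 (pVgU p v u).
Definition hV (p : U -> V -> R) (v : V) : R := - log2 (pV p v).

Definition suppU (p : U -> V -> R) : {set U} := [set u | 0 < pU p u].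
End InfoDensity.

From HB Require Import structures.
From mathcomp Require Import all_boot all_order all_algebra.
From mathcomp Require Import all_classical all_reals all_analysis.
From mathcomp Require Import lra.
Import Order.TTheory GRing.Theory Num.Theory.
Local Open Scope classical_set_scope.
Local Open Scope ring_scope.

(* On the event, write a = p_{V|U}(v|u), b = p_V(v) and c = 2^-alpha.  Either
   a < c b, and then p(u,v) = a p_U(u) < c p_U(u) p_V(v), or b < c a, and then
   p(u,v) <= b < c a.  So wherever p(u,v) > 0 the event is strictly dominated
   by the envelope c (p_U p_V + p_{V|U}), whose total mass is c (1 + |supp U|)
   because p_{V|U}(.|u) has mass 1 on the support of U and 0 off it.  As that
   mass is finite, strict domination at a single point of positive probability
   makes the final inequality strict. *)

Section esum_lemmas.
Context {R : realType}.
Local Open Scope ereal_scope.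

Lemma ge0_esumZl (T : choiceType) (S : set T) (r : R) (a : T -> \bar R) :
  (0 <= r)%R -> (forall x, 0 <= a x) ->
  \esum_(x in S) (r%:E * a x) = r%:E * \esum_(x in S) a x.
Proof.
move=> r_ge0 a_ge0; rewrite /esum -ereal_supZl //; last first.
  by apply/set0P; exists 0; exists set0; [exact: fsets_set0 | rewrite fsbig_set0].
congr ereal_sup; apply/seteqP; split => _ [X SX <-].
  by exists (\sum_(x \in X) a x); [exists X | rewrite ge0_mule_fsumr].
by case: SX => Y SY <-; exists Y => //; rewrite ge0_mule_fsumr.
Qed.

Lemma esum_setT_fin (T : finType) (a : T -> \bar R) :
  (forall x, 0 <= a x) -> \esum_(x in [set: T]) a x = \sum_(x : T) a x.
Proof.
move=> a_ge0; rewrite esum_fset //; last exact: finite_finset.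
rewrite (fsbigE (enum T)) ?enum_uniq //; last by move=> x _; rewrite mem_enum.
by rewrite big_enum_cond; apply: eq_bigl => x; rewrite in_setT.
Qed.

Lemma esum_setT_pair (T1 T2 : choiceType) (a : T1 -> T2 -> \bar R) :
  (forall i j, 0 <= a i j) ->
  \esum_(k in [set: T1 * T2]) a k.1 k.2 =
  \esum_(i in [set: T1]) \esum_(j in [set: T2]) a i j.
Proof.
move=> a_ge0; rewrite esum_esum //.
by congr esum; apply/seteqP; split => k.
Qed.

Lemma lt_esum (T : choiceType) (S : set T) (a b : T -> \bar R) :
  (forall x, S x -> 0 <= a x) -> (forall x, S x -> 0 <= b x) ->
  (forall x, S x -> 0 < a x -> a x < b x) ->
  0 < \esum_(x in S) b x < +oo ->
  \esum_(x in S) a x < \esum_(x in S) b x.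
Proof.
move=> a_ge0 b_ge0 ab_lt /andP[b_gt0 b_fin].
have ab x : S x -> a x <= b x.
  move=> Sx; have [/(ab_lt _ Sx)/ltW //|a_le0] := ltP 0 (a x).
  exact: le_trans a_le0 (b_ge0 _ Sx).
have [[x0 Sx0 ax0_gt0]|no_pos] := pselect (exists2 x, S x & 0 < a x); last first.
  rewrite esum1 // => x Sx; apply/eqP; rewrite eq_le a_ge0 // andbT leNgt.
  by apply/negP => ax_gt0; apply: no_pos; exists x.
have esum_x0 (f : T -> \bar R) : (forall x, S x -> 0 <= f x) ->
    \esum_(x in S) f x = f x0 + \esum_(x in S `&` ~` [set x0]) f x.
  move=> f_ge0; rewrite (esumID [set x0] S f) // setIidr; last by move=> _ ->.
  by rewrite esum_set1 // f_ge0.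
have S_x0 x : (S `&` ~` [set x0]) x -> S x by case.
rewrite esum_x0 // [X in _ < X]esum_x0 //; move: b_fin; rewrite esum_x0 // => b_fin.
have rest_le : \esum_(x in S `&` ~` [set x0]) a x <= \esum_(x in S `&` ~` [set x0]) b x.
  by apply: le_esum => x /S_x0 /ab.
apply: lte_leD => //; last exact: ab_lt.
rewrite ge0_fin_numE; last by apply: esum_ge0 => x /S_x0 /a_ge0.
by apply: le_lt_trans b_fin; apply: le_trans rest_le _; rewrite leeDr ?b_ge0.
Qed.

End esum_lemmas.

Lemma log2_gap_ltr {R : realType} {a b alpha : R} : 0 < a -> 0 < b ->
  alpha < log2 a - log2 b -> b < a * 2 `^ (- alpha).
Proof.
move=> a_gt0 b_gt0; rewrite /log2 -mulrBl ltr_pdivlMr ?ln_gt0 ?ltr1n // => gap.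
rewrite -ltr_ln ?posrE ?mulr_gt0 ?powR_gt0 // lnM ?posrE ?powR_gt0 // ln_powR.
lra.
Qed.

Definition envelope {R : realType} {U : finType} {V : countType}
  (p : U -> V -> R) u v := pU p u * pV p v + pVgU p v u.

Section joint_pmf.
Context {R : realType} {U : finType} {V : countType} {p : U -> V -> R}.
Hypothesis p_ge0 : forall u v, 0 <= p u v.
Hypothesis p_total : (\esum_(x in [set: U * V]) (p x.1 x.2)%:E = 1)%E.

Let p_ge0E u v : (0 <= (p u v)%:E)%E. Proof. by rewrite lee_fin. Qed.
Let esum_p_ge0 u : (0 <= \esum_(v in [set: V]) (p u v)%:E)%E.
Proof. exact: esum_ge0. Qed.
Local Hint Resolve p_ge0E esum_p_ge0 : core.

Lemma esum_pU u : (\esum_(v in [set: V]) (p u v)%:E)%E = (pU p u)%:E.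
Proof.
rewrite /pU fineK // ge0_fin_numE //; apply: (@le_lt_trans _ _ 1%E); last exact: ltry.
rewrite -p_total (@esum_setT_pair _ _ _ (fun u v => (p u v)%:E)) // esum_setT_fin //.
by rewrite (bigD1 u) //= leeDl // sume_ge0.
Qed.

Lemma pU_ge0 u : 0 <= pU p u.
Proof. by rewrite -lee_fin -esum_pU. Qed.

Lemma le_pU u v : p u v <= pU p u.
Proof.
rewrite -lee_fin -esum_pU; apply: esum_ge; exists [set v]; last by rewrite fsbig_set1.
by split; [exact: finite_set1 | move=> ? _].
Qed.

Lemma pV_ge0 v : 0 <= pV p v.
Proof. exact: sumr_ge0. Qed.

Lemma le_pV u v : p u v <= pV p v.
Proof. by rewrite /pV (bigD1 u) //= lerDl sumr_ge0. Qed.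

Lemma pVgU_ge0 u v : 0 <= pVgU p v u.
Proof. by rewrite divr_ge0 ?pU_ge0. Qed.

Lemma sum_pU : \sum_(u : U) pU p u = 1.
Proof.
suff : (\sum_(u : U) pU p u)%:E = 1%E by case.
rewrite -p_total (@esum_setT_pair _ _ _ (fun u v => (p u v)%:E)) //.
rewrite esum_setT_fin //.
by under [RHS]eq_bigr do rewrite esum_pU; rewrite sumEFin.
Qed.

Lemma esum_pV : (\esum_(v in [set: V]) (pV p v)%:E)%E = 1%E.
Proof.
under eq_esum do rewrite /pV -sumEFin.
rewrite esum_sum //; under eq_bigr do rewrite esum_pU.
by rewrite sumEFin sum_pU.
Qed.

Lemma esum_pVgU u :
  (\esum_(v in [set: V]) (pVgU p v u)%:E)%E = (u \in suppU p)%:R%:E.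
Proof.
under eq_esum do rewrite /pVgU EFinM muleC.
rewrite ge0_esumZl ?invr_ge0 ?pU_ge0 // esum_pU -EFinM inE.
have [pU_gt0|] := ltP 0 (pU p u); first by rewrite mulVf ?gt_eqF.
by rewrite le_eqVlt ltNge pU_ge0 orbF => /eqP ->; rewrite invr0 mul0r.
Qed.

Lemma envelope_ge0 u v : 0 <= envelope p u v.
Proof. by rewrite addr_ge0 ?pVgU_ge0 // mulr_ge0 ?pU_ge0 ?pV_ge0. Qed.

Lemma esum_envelope :
  (\esum_(x in [set: U * V]) (envelope p x.1 x.2)%:E)%E = (#|suppU p|.+1)%:R%:E.
Proof.
rewrite (@esum_setT_pair _ _ _ (fun u v => (envelope p u v)%:E)) => [|u v]; last first.
  by rewrite lee_fin envelope_ge0.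
have esum_envelope_u u : (\esum_(v in [set: V]) (envelope p u v)%:E)%E =
    (pU p u + (u \in suppU p)%:R)%:E.
  under eq_esum do rewrite EFinD EFinM.
  rewrite esumD => [||v _]; last by rewrite lee_fin pVgU_ge0.
  - by rewrite ge0_esumZl ?pU_ge0 // => [|v]; rewrite ?esum_pV ?mule1 ?esum_pVgU // lee_fin pV_ge0.
  - by move=> v _; rewrite -EFinM lee_fin mulr_ge0 ?pU_ge0 ?pV_ge0.
under eq_esum do rewrite esum_envelope_u.
rewrite esum_setT_fin => [|u]; last by rewrite lee_fin addr_ge0 ?pU_ge0.
rewrite sumEFin big_split /= sum_pU -nat1r; congr (1 + _)%:E.
rewrite (eq_bigr (fun u => if u \in suppU p then 1 else 0)) => [|u _]; last by case: (u \in _).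
by rewrite -big_mkcond sumr_const.
Qed.

Lemma lt_envelope (alpha : R) u v :
  0 < p u v -> alpha < `|hVgU p u v - hV p v| ->
  p u v < 2 `^ (- alpha) * envelope p u v.
Proof.
move=> p_gt0; have c_gt0 : 0 < (2 : R) `^ (- alpha) by rewrite powR_gt0.
have pU_gt0 := lt_le_trans p_gt0 (le_pU u v).
have pV_gt0 := lt_le_trans p_gt0 (le_pV u v).
have pVgU_gt0 : 0 < pVgU p v u by rewrite divr_gt0.
have p_eq : p u v = pVgU p v u * pU p u by rewrite /pVgU divfK ?gt_eqF.
rewrite /envelope /hVgU /hV opprK addrC ltr_normr opprB.
case/orP => [/(log2_gap_ltr pV_gt0 pVgU_gt0) | /(log2_gap_ltr pVgU_gt0 pV_gt0)] gap.
- rewrite p_eq; nra.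
- have := le_pV u v; have := mulr_gt0 (mulr_gt0 c_gt0 pU_gt0) pV_gt0; nra.
Qed.

End joint_pmf.

Theorem lemma30 (R : realType) (U : finType) (V : countType)
  (p : U -> V -> R) (alpha : R) :
  is_joint_pmf p -> 0 < alpha ->
  (Pr p [set x | (alpha < `| hVgU p x.1 x.2 - hV p x.2 |)%R]
   < ((#|suppU p|.+1)%:R * (2 : R) `^ (- alpha))%R%:E)%E.
Proof.
(* The bound holds for every real alpha. *)
move=> [p_ge0 p_total] _; set c := (2 : R) `^ (- alpha).
have c_gt0 : 0 < c by rewrite powR_gt0.
have mass : (\esum_(x in [set: U * V]) (c * envelope p x.1 x.2)%:E =
    ((#|suppU p|.+1)%:R * c)%:E)%E.
  under eq_esum do rewrite EFinM.
  rewrite ge0_esumZl ?ltW // => [|x]; last by rewrite lee_fin (envelope_ge0 p_ge0 p_total).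
  by rewrite esum_envelope // -EFinM mulrC.
rewrite /Pr esum_mkcond -mass; apply: lt_esum => [x _|x _|x _|].
- by case: ifP; rewrite lee_fin.
- by rewrite lee_fin; apply: mulr_ge0; [exact: ltW | exact: envelope_ge0].
- case: ifP => [/set_mem /= event|]; last by rewrite ltxx.
  by rewrite !lte_fin => p_gt0; apply: lt_envelope.
- by rewrite mass lte_fin ltry mulr_gt0 ?ltr0Sn.
Qed.
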